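(* Let $T:X\to Y$ be an injective linear operator between Archimedean vector lattices, and assume that $X$ has sufficiently many components. If $T$ is disjointness preserving, then the inverse $T^{-1}:TX\to X$ satisfies condition $(\beta)$, i.e. for $y,y_0\in TX$ with $y\in\{y_0\}^{dd}$ (band taken in $Y$) we have $T^{-1}y\in\{T^{-1}y_0\}^{dd}$ (band taken in $X$).
   Context: All vector lattices are Archimedean. For a subset $A$ of a vector lattice $X$, $A^d=\{x\in X: |x|\wedge|a|=0 \text{ for all } a\in A\}$ and $A^{dd}=(A^d)^d$. For $a,b\in X$ we write $a\lhd b$ if $\{a\}^{dd}\subseteq\{b\}^{dd}$. A linear operator $S$ satisfies condition $(\beta)$ if $Sa\lhd Sb$ whenever $a\lhd b$. A linear operator is disjointness preserving if it maps disjoint elements to disjoint elements. An element $x'$ is a component of $x$ if $|x'|\wedge|x-x'|=0$. A vector lattice $X$ has sufficiently many components if whenever $x,u\in X$ with $x\notin\{u\}^{dd}$, there exists a nonzero component $x'$ of $x$ with $|x'|\wedge|u|=0$. *)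

From HB Require Import structures.
From mathcomp Require Import all_boot all_order all_algebra.
From mathcomp Require Import reals.
Set Implicit Arguments. Unset Strict Implicit. Unset Printing Implicit Defensive.
Import Order.TTheory GRing.Theory Num.Theory.
Local Open Scope ring_scope.

Record vl_ops (R : realType) (X : lmodType R) := VLOps {
  vle : X -> X -> Prop;
  vjoin : X -> X -> X;
  vmeet : X -> X -> X }.

Definition is_vector_lattice (R : realType) (X : lmodType R) (L : vl_ops X) :=
  (forall x, vle L x x) /\
      (forall x y, vle L x y -> vle L y x -> x = y) /\
      (forall x y z, vle L x y -> vle L y z -> vle L x z) /\
      (forall x y z, vle L x y -> vle L (x + z) (y + z)) /\
      (forall (a : R) x y, 0 <= a -> vle L x y -> vle L (a *: x) (a *: y)) /\
      (forall x y, vle L x (vjoin L x y) /\ vle L y (vjoin L x y) /\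
         forall z, vle L x z -> vle L y z -> vle L (vjoin L x y) z) /\
      (forall x y, vle L (vmeet L x y) x /\ vle L (vmeet L x y) y /\
         forall z, vle L z x -> vle L z y -> vle L z (vmeet L x y)).

Definition is_archimedean (R : realType) (X : lmodType R) (L : vl_ops X) :=
  forall x y : X, vle L 0 x -> (forall n : nat, vle L (x *+ n) y) -> x = 0.

Definition is_archimedean_vector_lattice (R : realType) (X : lmodType R)
  (L : vl_ops X) := is_vector_lattice L /\ is_archimedean L.

Definition vabs (R : realType) (X : lmodType R) (L : vl_ops X) (x : X) :=
  vjoin L x (- x).

Definition vdisj (R : realType) (X : lmodType R) (L : vl_ops X) (x y : X) :=
  vmeet L (vabs L x) (vabs L y) = 0.

Definition dcomp (R : realType) (X : lmodType R) (L : vl_ops X)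
  (A : X -> Prop) : X -> Prop :=
  fun x => forall a, A a -> vdisj L x a.

Definition band1 (R : realType) (X : lmodType R) (L : vl_ops X) (a : X) :
  X -> Prop := dcomp L (dcomp L (fun z => z = a)).

Definition vlhd (R : realType) (X : lmodType R) (L : vl_ops X) (a b : X) :=
  forall z, band1 L a z -> band1 L b z.

Definition disjointness_preserving (R : realType) (X Y : lmodType R)
  (LX : vl_ops X) (LY : vl_ops Y) (T : X -> Y) :=
  forall a b, vdisj LX a b -> vdisj LY (T a) (T b).

Definition is_component (R : realType) (X : lmodType R) (L : vl_ops X)
  (x' x : X) := vdisj L x' (x - x').

Definition sufficiently_many_components (R : realType) (X : lmodType R)
  (L : vl_ops X) :=
  forall x u : X, ~ band1 L u x ->
    exists x' : X, [/\ is_component L x' x, x' <> 0 & vdisj L x' u].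

(* If x is not in the band {x0}^dd, sufficiently many components give a nonzero
   component x' of x that is disjoint from x0.  Then T x' is disjoint from T x0,
   hence from the whole band {T x0}^dd, which contains T x; being also disjoint
   from T x - T x' = T (x - x'), it is disjoint from itself, so T x' = 0 and
   x' = 0 by injectivity. *)
From HB Require Import structures.
From mathcomp Require Import all_boot all_order all_algebra.
From mathcomp Require Import reals.
From Stdlib Require Import Classical.
Import Order.TTheory GRing.Theory Num.Theory.
Local Open Scope ring_scope.

Section VectorLattice.
Context {R : realType} {X : lmodType R} {L : vl_ops X}.
Hypothesis HL : is_vector_lattice L.
Local Notation "x <=v y" := (vle L x y) (at level 70).

Lemma vle_refl x : x <=v x.
Proof. by case: HL. Qed.

Lemma vle_anti x y : x <=v y -> y <=v x -> x = y.
Proof. by case: HL => _ [+ _]; apply. Qed.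

Lemma vle_trans {x y z} : x <=v y -> y <=v z -> x <=v z.
Proof. by case: HL => _ [_ [+ _]]; apply. Qed.

Lemma vle_add2r z x y : x <=v y -> x + z <=v y + z.
Proof. by case: HL => _ [_ [_ [+ _]]]; apply. Qed.

Lemma vle_scale {a : R} {x y} : 0 <= a -> x <=v y -> a *: x <=v a *: y.
Proof. by case: HL => _ [_ [_ [_ [+ _]]]]; apply. Qed.

Lemma vjoin_spec x y : [/\ x <=v vjoin L x y, y <=v vjoin L x y &
  forall z, x <=v z -> y <=v z -> vjoin L x y <=v z].
Proof. by case: HL => _ [_ [_ [_ [_ [/(_ x y) [? [? ?]] _]]]]]. Qed.

Lemma vmeet_spec x y : [/\ vmeet L x y <=v x, vmeet L x y <=v y &
  forall z, z <=v x -> z <=v y -> z <=v vmeet L x y].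
Proof. by case: HL => _ [_ [_ [_ [_ [_ /(_ x y) [? [? ?]]]]]]]. Qed.

Lemma vle_joinl x y : x <=v vjoin L x y.
Proof. by case: (vjoin_spec x y). Qed.

Lemma vle_joinr x y : y <=v vjoin L x y.
Proof. by case: (vjoin_spec x y). Qed.

Lemma vjoin_lub x y z : x <=v z -> y <=v z -> vjoin L x y <=v z.
Proof. by case: (vjoin_spec x y) => _ _; apply. Qed.

Lemma vle_meetl x y : vmeet L x y <=v x.
Proof. by case: (vmeet_spec x y). Qed.

Lemma vle_meetr x y : vmeet L x y <=v y.
Proof. by case: (vmeet_spec x y). Qed.

Lemma vmeet_glb x y z : z <=v x -> z <=v y -> z <=v vmeet L x y.
Proof. by case: (vmeet_spec x y) => _ _; apply. Qed.

Lemma vle_add2l z x y : x <=v y -> z + x <=v z + y.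
Proof. by rewrite ![z + _]addrC; apply: vle_add2r. Qed.

Lemma vle_add x y z w : x <=v y -> z <=v w -> x + z <=v y + w.
Proof. by move=> /(vle_add2r z) xy /(vle_add2l y); apply: vle_trans. Qed.

Lemma vle_subl_addr x y z : x <=v y + z -> x - z <=v y.
Proof. by move=> /(vle_add2r (- z)); rewrite addrK. Qed.

Lemma vle_subr_addr x y z : x - z <=v y -> x <=v y + z.
Proof. by move=> /(vle_add2r z); rewrite subrK. Qed.

Lemma vle_subl {x} y : 0 <=v x -> y - x <=v y.
Proof.
by move=> x_ge0; apply: vle_subl_addr; rewrite -{1}[y]addr0; apply: vle_add2l.
Qed.

Lemma vle_abs x : x <=v vabs L x.
Proof. exact: vle_joinl. Qed.

Lemma vle_oppabs x : - x <=v vabs L x.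
Proof. exact: vle_joinr. Qed.

Lemma vabs_ge0 x : 0 <=v vabs L x.
Proof.
have two_abs : 0 <=v vabs L x + vabs L x.
  by rewrite -(addrN x); apply: vle_add; [apply: vle_abs | apply: vle_oppabs].
have half_ge0 : (0 : R) <= 2^-1 by rewrite invr_ge0 ler0n.
have := vle_scale half_ge0 two_abs.
by rewrite scaler0 -mulr2n -scaler_nat scalerA mulVf ?pnatr_eq0 // scale1r.
Qed.

Lemma vabs_sub a b : vabs L (a - b) <=v vabs L a + vabs L b.
Proof.
apply: vjoin_lub; first by apply: vle_add; [apply: vle_abs | apply: vle_oppabs].
by rewrite opprB addrC; apply: vle_add; [apply: vle_oppabs | apply: vle_abs].
Qed.

Lemma vmeetC u v : vmeet L u v = vmeet L v u.
Proof.
by apply: vle_anti; apply: vmeet_glb; (exact: vle_meetl || exact: vle_meetr).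
Qed.

Lemma vmeetxx u : vmeet L u u = u.
Proof. by apply: vle_anti; [apply: vle_meetl | apply: vmeet_glb; apply: vle_refl]. Qed.

Lemma vmeet_ge0 {u v} : 0 <=v u -> 0 <=v v -> 0 <=v vmeet L u v.
Proof. exact: vmeet_glb. Qed.

Lemma vmeet_mono u {a b} : a <=v b -> vmeet L u a <=v vmeet L u b.
Proof.
by move=> ab; apply: vmeet_glb; [apply: vle_meetl | apply: vle_trans (vle_meetr u a) ab].
Qed.

Lemma vmeet_addr_le {u v w} : 0 <=v u -> 0 <=v v -> 0 <=v w ->
  vmeet L u (v + w) <=v vmeet L u v + vmeet L u w.
Proof.
move=> u_ge0 v_ge0 w_ge0; have tle := vle_meetl u (v + w).
set t := vmeet L u (v + w) in tle *.
apply: vle_subr_addr; apply: vmeet_glb.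
  exact: vle_trans (vle_subl t (vmeet_ge0 u_ge0 w_ge0)) tle.
apply: vle_subl_addr; rewrite addrC; apply: vle_subr_addr; apply: vmeet_glb.
  exact: vle_trans (vle_subl t v_ge0) tle.
by apply: vle_subl_addr; rewrite addrC; apply: vle_meetr.
Qed.

Lemma vdisj_sym {a b} : vdisj L a b -> vdisj L b a.
Proof. by rewrite /vdisj vmeetC. Qed.

Lemma vdisj_subr {y a b} : vdisj L y a -> vdisj L y b -> vdisj L y (a - b).
Proof.
rewrite /vdisj => ya yb.
apply: vle_anti; last by apply: vmeet_ge0; apply: vabs_ge0.
apply: vle_trans (vmeet_mono _ (vabs_sub a b)) _.
apply: vle_trans (vmeet_addr_le (vabs_ge0 _) (vabs_ge0 _) (vabs_ge0 _)) _.
by rewrite ya yb addr0; apply: vle_refl.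
Qed.

Lemma vdisj_self_eq0 y : vdisj L y y -> y = 0.
Proof.
rewrite /vdisj vmeetxx => abs_y0.
have y_le0 : y <=v 0 by rewrite -abs_y0; apply: vle_abs.
have : - y <=v 0 by rewrite -abs_y0; apply: vle_oppabs.
by move=> /(vle_add2r y); rewrite addNr add0r; apply: vle_anti.
Qed.

Lemma component_disj_eq0 {y x} : is_component L y x -> vdisj L y x -> y = 0.
Proof.
move=> y_comp yx; apply: vdisj_self_eq0.
by have := vdisj_subr yx y_comp; rewrite opprB addrC subrK.
Qed.

Lemma band1_self a : band1 L a a.
Proof. by move=> b b_da; apply: vdisj_sym; apply: b_da. Qed.

Lemma vdisj_band1 {y a z} : vdisj L y a -> band1 L a z -> vdisj L y z.
Proof. by move=> ya z_dda; apply: vdisj_sym; apply: z_dda => _ ->. Qed.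

Lemma band1_vlhd x x0 : band1 L x0 x -> vlhd L x x0.
Proof.
move=> x_dd z z_ddx w w_d; apply: z_ddx => _ ->.
exact: vdisj_band1 (w_d _ erefl) x_dd.
Qed.

End VectorLattice.

Theorem theorem3p2 (R : realType) (X Y : lmodType R)
  (LX : vl_ops X) (LY : vl_ops Y)
  (HX : is_archimedean_vector_lattice LX)
  (HY : is_archimedean_vector_lattice LY)
  (T : {linear X -> Y})
  (Tinj : injective T)
  (HXc : sufficiently_many_components LX)
  (Tdp : disjointness_preserving LX LY T) :
  forall x x0 : X, vlhd LY (T x) (T x0) -> vlhd LX x x0.
Proof.
case: HX => HLX _; case: HY => HLY _ x x0 Tx_Tx0.
apply: (band1_vlhd HLX); apply: NNPP => x_notin.
have [x' [x'_comp x'_neq0 x'_x0]] := HXc _ _ x_notin.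
apply: x'_neq0; apply: Tinj; rewrite linear0.
apply: (component_disj_eq0 HLY (x := T x)).
  by rewrite /is_component -linearB; apply: Tdp.
apply: (vdisj_band1 HLY (Tdp _ _ x'_x0)).
exact: Tx_Tx0 _ (band1_self HLY (T x)).
Qed.
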